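(* Let $0<p<1$ and $\alpha>-1$, let $\beta=\frac{1-p}{1+\alpha p}$, and define the sequence $(f_i)_{i\ge1}$ by $$f_1=\frac{p}{1+\beta(1+\alpha)},\qquad f_i=\frac{\beta(i-1+\alpha)}{1+\beta(i+\alpha)}\,f_{i-1}\quad (i>1).$$ Then (I) for all $i\ge1$, $0<f_i<1$ and $f_i>f_{i+1}$; and (II) $\sum_{i=1}^\infty f_i=p$ and $\sum_{i=1}^\infty i f_i = 1$.
   Context: Equivalently, $(f_i)$ is the unique solution of $f_1=p-\beta(1+\alpha)f_1$ and $f_i=\beta\big((i-1+\alpha)f_{i-1}-(i+\alpha)f_i\big)$ for $i>1$. *)

From Stdlib Require Import Reals Lra Lia.
From Coquelicot Require Import Coquelicot.
Open Scope R_scope.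

Definition beta_A3 (p alpha : R) : R := (1 - p) / (1 + alpha * p).

(* g n = f_(n+1):
   g 0     = p / (1 + beta (1 + alpha))                         (= f_1)
   g (n+1) = beta (i-1+alpha) / (1 + beta (i+alpha)) * g n  with i = n+2. *)
Fixpoint fA3_aux (p alpha : R) (n : nat) : R :=
  let b := beta_A3 p alpha in
  match n with
  | O => p / (1 + b * (1 + alpha))
  | S m => b * (INR (S m + 1) - 1 + alpha) / (1 + b * (INR (S m + 1) + alpha))
           * fA3_aux p alpha m
  end.

(* f i for i >= 1 (f 0 is an unused junk value). *)
Definition fA3 (p alpha : R) (i : nat) : R := fA3_aux p alpha (Nat.pred i).

From Stdlib Require Import Reals Lra Lia.
From Coquelicot Require Import Coquelicot.
Open Scope R_scope.

(* With the weights w_i = (i + alpha) f_i the recurrence reads f_1 = p - beta w_1 and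
   f_(i+1) = beta (w_i - w_(i+1)), so the partial sums telescope:
   sum_(i<=N) f_i = p - beta w_N, and summation by parts gives
   (1 - beta) sum_(i<=N) i f_i = p + alpha beta sum_(i<=N) f_i - beta (N+1) w_N.
   As f > 0, w is nonnegative and nonincreasing, both partial sums are bounded, and w is
   summable; a nonincreasing summable sequence satisfies N w_N -> 0, and letting
   N -> oo gives sum f_i = p and sum i f_i = p (1 + alpha beta) / (1 - beta) = 1. *)

Lemma sum_f_R0_tail_ge (a : nat -> R) :
  (forall n, a (S n) <= a n) ->
  forall m k, INR k * a (m + k)%nat <= sum_f_R0 a (m + k) - sum_f_R0 a m.
Proof.
  intros a_decr m k; induction k as [|k IHk].
  - rewrite Nat.add_0_r; simpl; lra.
  - rewrite Nat.add_succ_r, tech5, S_INR.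
    pose proof (a_decr (m + k)%nat); pose proof (pos_INR k); nra.
Qed.

Lemma div2_bounds n : (2 * Nat.div2 n <= n <= S (2 * Nat.div2 n))%nat.
Proof. pose proof (Nat.div2_odd n); destruct (Nat.odd n); simpl in *; lia. Qed.

Lemma filterlim_div2 : filterlim Nat.div2 eventually eventually.
Proof.
  intros P [N HN]; exists (2 * N)%nat; intros n Hn; apply HN.
  pose proof (div2_bounds n); lia.
Qed.

(* Olivier's theorem: as a is nonincreasing, (n - n/2) a_n <= a_(n/2+1) + ... + a_n,
   a difference of partial sums that tends to 0. *)
Lemma is_lim_seq_mul_index_0 (a : nat -> R) :
  (forall n, 0 <= a n) -> (forall n, a (S n) <= a n) -> ex_series a ->
  is_lim_seq (fun n => INR n * a n) 0.
Proof.
  intros a_ge0 a_decr [l Hl].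
  assert (sum_lim : is_lim_seq (sum_f_R0 a) l).
  { apply (is_lim_seq_ext (sum_n a)); [intro n; apply sum_n_Reals|exact Hl]. }
  apply is_lim_seq_le_le with (u := fun _ => 0)
    (w := fun n => 2 * (sum_f_R0 a n - sum_f_R0 a (Nat.div2 n))).
  - intro n; split; [pose proof (pos_INR n); pose proof (a_ge0 n); nra|].
    set (k := (n - Nat.div2 n)%nat).
    pose proof (div2_bounds n).
    assert (n_eq : n = (Nat.div2 n + k)%nat) by (unfold k; lia).
    assert (n_le : INR n <= 2 * INR k).
    { replace (2 * INR k) with (INR (2 * k)) by (rewrite mult_INR; simpl; ring).
      apply le_INR; unfold k; lia. }
    pose proof (sum_f_R0_tail_ge a a_decr (Nat.div2 n) k) as tail.
    rewrite <- n_eq in tail; pose proof (a_ge0 n); nra.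
  - apply is_lim_seq_const.
  - replace (Finite 0) with (Rbar_mult 2 (Rbar_minus l l)) by (simpl; f_equal; ring).
    apply is_lim_seq_scal_l, is_lim_seq_minus'; [exact sum_lim|].
    exact (is_lim_seq_subseq _ _ _ filterlim_div2 sum_lim).
Qed.

Lemma ex_series_of_bounded_sums (a : nat -> R) (M : R) :
  (forall n, 0 <= a n) -> (forall N, sum_f_R0 a N <= M) -> ex_series a.
Proof.
  intros a_ge0 bound.
  destruct (ex_finite_lim_seq_incr (sum_f_R0 a) M) as [l Hl]; [|exact bound|].
  - intro N; rewrite tech5; pose proof (a_ge0 (S N)); lra.
  - exists l; change (is_lim_seq (sum_n a) l).
    apply (is_lim_seq_ext (sum_f_R0 a)); [intro N; now rewrite sum_n_Reals|exact Hl].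
Qed.

Section Recurrence.

Variables (p alpha beta : R) (f : nat -> R).
Hypotheses (p_gt0 : 0 < p) (alpha_gt : -1 < alpha) (beta_gt0 : 0 < beta) (beta_lt1 : beta < 1).

(* [f n] is the paper's f_(n+1). *)
Hypothesis f_0 : f 0%nat = p - beta * (1 + alpha) * f 0%nat.
Hypothesis f_S :
  forall n, f (S n) = beta * ((INR n + 1 + alpha) * f n - (INR n + 2 + alpha) * f (S n)).

Let w (n : nat) : R := (INR n + 1 + alpha) * f n.

Lemma f_0_w : f 0%nat = p - beta * w 0%nat.
Proof. unfold w; simpl INR; lra. Qed.

Lemma w_S n : w (S n) = (INR n + 2 + alpha) * f (S n).
Proof. unfold w; rewrite S_INR; ring. Qed.

Lemma f_S_w n : f (S n) = beta * (w n - w (S n)).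
Proof. rewrite w_S; apply f_S. Qed.

Lemma index_shift_pos n : 0 < INR n + 1 + alpha.
Proof. pose proof (pos_INR n); lra. Qed.

Lemma f_0_mul : f 0%nat * (1 + beta * (1 + alpha)) = p.
Proof. lra. Qed.

Lemma f_S_mul n :
  f (S n) * (1 + beta * (INR n + 2 + alpha)) = beta * (INR n + 1 + alpha) * f n.
Proof. pose proof (f_S n); lra. Qed.

Lemma f_pos n : 0 < f n.
Proof.
  induction n as [|n IHn].
  - pose proof f_0_mul. assert (0 < beta * (1 + alpha)) by nra. nra.
  - pose proof (f_S_mul n). pose proof (index_shift_pos n).
    assert (0 < beta * (INR n + 1 + alpha)) by nra. nra.
Qed.

Lemma f_decr n : f (S n) < f n.
Proof.
  pose proof (f_S_mul n) as E. pose proof (index_shift_pos n). pose proof (f_pos n).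
  assert (D : 0 < 1 + beta * (INR n + 2 + alpha)) by nra.
  apply (Rmult_lt_reg_r _ _ _ D). rewrite E. nra.
Qed.

Lemma f_lt_p n : f n < p.
Proof.
  induction n as [|n IHn].
  - pose proof f_0_mul. pose proof (f_pos 0). assert (0 < beta * (1 + alpha)) by nra. nra.
  - pose proof (f_decr n). lra.
Qed.

Lemma w_nonneg n : 0 <= w n.
Proof. pose proof (index_shift_pos n); pose proof (f_pos n); unfold w; nra. Qed.

Lemma w_decr n : w (S n) <= w n.
Proof. pose proof (f_S_w n); pose proof (f_pos (S n)); nra. Qed.

Lemma sum_f_eq N : sum_f_R0 f N = p - beta * w N.
Proof.
  induction N as [|N IHN]; simpl; [exact f_0_w|].
  rewrite IHN, f_S_w; ring.
Qed.

Lemma sum_index_f_eq N :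
  (1 - beta) * sum_f_R0 (fun n => INR (S n) * f n) N
  = p + beta * alpha * sum_f_R0 f N - beta * (INR N + 2) * w N.
Proof.
  induction N as [|N IHN].
  - unfold w; simpl; rewrite <- f_0_mul; ring.
  - rewrite !tech5, Rmult_plus_distr_l, IHN.
    replace (beta * (INR N + 2) * w N) with ((INR N + 2) * (beta * w N)) by ring.
    replace (beta * w N) with (f (S N) + beta * w (S N)) by (rewrite (f_S_w N); ring).
    rewrite w_S, !S_INR; ring.
Qed.

Lemma sum_f_bounds N : 0 <= sum_f_R0 f N <= p.
Proof.
  split.
  - apply cond_pos_sum; intro n; apply Rlt_le, f_pos.
  - rewrite sum_f_eq; pose proof (w_nonneg N); nra.
Qed.

Lemma ex_series_f : ex_series f.
Proof.
  apply (ex_series_of_bounded_sums _ p); [intro n; apply Rlt_le, f_pos|].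
  intro N; apply sum_f_bounds.
Qed.

Lemma ex_series_index_f : ex_series (fun n => INR (S n) * f n).
Proof.
  apply (ex_series_of_bounded_sums _ ((p + beta * (1 + alpha) * p) / (1 - beta))).
  - intro n; pose proof (pos_INR (S n)); pose proof (f_pos n); nra.
  - intro N; apply Rle_div_r; [lra|].
    rewrite Rmult_comm, sum_index_f_eq.
    pose proof (sum_f_bounds N); pose proof (w_nonneg N); pose proof (pos_INR N).
    assert (alpha * sum_f_R0 f N <= (1 + alpha) * p) by nra.
    assert (0 <= beta * (INR N + 2) * w N) by (apply Rmult_le_pos; nra).
    nra.
Qed.

Lemma ex_series_w : ex_series w.
Proof.
  apply (ex_series_ext (fun n => INR (S n) * f n + alpha * f n)).
  - intro n; unfold w; rewrite S_INR; simpl; ring.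
  - apply (ex_series_plus (K := R_AbsRing) (V := R_NormedModule)); [exact ex_series_index_f|].
    exact (ex_series_scal_l (K := R_AbsRing) (V := R_NormedModule) alpha f ex_series_f).
Qed.

Lemma is_lim_seq_w : is_lim_seq w 0.
Proof. exact (ex_series_lim_0 _ ex_series_w). Qed.

Lemma is_series_f : is_series f p.
Proof.
  change (is_lim_seq (sum_n f) p).
  apply (is_lim_seq_ext (fun N => p - beta * w N)); [intro N; now rewrite sum_n_Reals, sum_f_eq|].
  replace (Finite p) with (Finite (p - beta * 0)) by (f_equal; ring).
  apply is_lim_seq_minus'; [apply is_lim_seq_const|].
  apply is_lim_seq_mult'; [apply is_lim_seq_const|apply is_lim_seq_w].
Qed.

Lemma is_lim_seq_index_w : is_lim_seq (fun N => (INR N + 2) * w N) 0.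
Proof.
  apply (is_lim_seq_ext (fun N => INR N * w N + 2 * w N)); [intro N; ring|].
  replace (Finite 0) with (Finite (0 + 2 * 0)) by (f_equal; ring).
  apply is_lim_seq_plus'.
  - apply is_lim_seq_mul_index_0; [exact w_nonneg|exact w_decr|exact ex_series_w].
  - apply is_lim_seq_mult'; [apply is_lim_seq_const|apply is_lim_seq_w].
Qed.

Lemma is_series_index_f :
  is_series (fun n => INR (S n) * f n) ((p + beta * alpha * p) / (1 - beta)).
Proof.
  change (is_lim_seq (sum_n (fun n => INR (S n) * f n)) ((p + beta * alpha * p) / (1 - beta))).
  apply (is_lim_seq_ext
    (fun N => (p + beta * alpha * sum_f_R0 f N - beta * ((INR N + 2) * w N)) / (1 - beta))).
  { intro N; rewrite sum_n_Reals, <- Rmult_assoc, <- sum_index_f_eq; field; lra. }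
  replace (Finite ((p + beta * alpha * p) / (1 - beta)))
    with (Finite ((p + beta * alpha * p - beta * 0) / (1 - beta))) by (f_equal; field; lra).
  apply is_lim_seq_div'; [|apply is_lim_seq_const|lra].
  apply is_lim_seq_minus'.
  - apply is_lim_seq_plus'; [apply is_lim_seq_const|].
    apply is_lim_seq_mult'; [apply is_lim_seq_const|].
    apply (is_lim_seq_ext (sum_n f)); [intro N; apply sum_n_Reals|exact is_series_f].
  - apply is_lim_seq_mult'; [apply is_lim_seq_const|exact is_lim_seq_index_w].
Qed.

End Recurrence.

Lemma beta_A3_bounds p alpha : 0 < p < 1 -> -1 < alpha -> 0 < beta_A3 p alpha < 1.
Proof.
  intros hp ha; unfold beta_A3; split.
  - apply Rdiv_lt_0_compat; nra.
  - apply Rlt_div_l; nra.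
Qed.

Lemma fA3_aux_0 p alpha : 0 < p < 1 -> -1 < alpha ->
  fA3_aux p alpha 0 = p - beta_A3 p alpha * (1 + alpha) * fA3_aux p alpha 0.
Proof.
  intros hp ha; pose proof (beta_A3_bounds p alpha hp ha).
  simpl; field; nra.
Qed.

Lemma fA3_aux_S p alpha : 0 < p < 1 -> -1 < alpha -> forall n,
  fA3_aux p alpha (S n) = beta_A3 p alpha *
    ((INR n + 1 + alpha) * fA3_aux p alpha n - (INR n + 2 + alpha) * fA3_aux p alpha (S n)).
Proof.
  intros hp ha n; pose proof (beta_A3_bounds p alpha hp ha); pose proof (pos_INR n).
  change (fA3_aux p alpha (S n)) with
    (beta_A3 p alpha * (INR (S n + 1) - 1 + alpha)
     / (1 + beta_A3 p alpha * (INR (S n + 1) + alpha)) * fA3_aux p alpha n).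
  rewrite plus_INR, S_INR; simpl INR; field; nra.
Qed.

Theorem lemmaA3 (p alpha : R) (hp0 : 0 < p) (hp1 : p < 1) (ha : -1 < alpha) :
  (forall i : nat, (1 <= i)%nat ->
     0 < fA3 p alpha i /\ fA3 p alpha i < 1 /\ fA3 p alpha (S i) < fA3 p alpha i) /\
  is_series (fun n : nat => fA3 p alpha (S n)) p /\
  is_series (fun n : nat => INR (S n) * fA3 p alpha (S n)) 1.
Proof.
  assert (hp : 0 < p < 1) by lra.
  destruct (beta_A3_bounds p alpha hp ha) as [hb0 hb1].
  pose proof (fA3_aux_0 p alpha hp ha) as g_0.
  pose proof (fA3_aux_S p alpha hp ha) as g_S.
  split; [|split].
  - intros [|i] hi; [lia|]; unfold fA3; simpl Nat.pred.
    pose proof (f_lt_p p alpha _ _ hp0 ha hb0 hb1 g_0 g_S i).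
    repeat split; [exact (f_pos p alpha _ _ hp0 ha hb0 hb1 g_0 g_S i)|lra|].
    exact (f_decr p alpha _ _ hp0 ha hb0 hb1 g_0 g_S i).
  - exact (is_series_f p alpha _ _ hp0 ha hb0 hb1 g_0 g_S).
  - replace 1 with ((p + beta_A3 p alpha * alpha * p) / (1 - beta_A3 p alpha))
      by (unfold beta_A3; field; nra).
    exact (is_series_index_f p alpha _ _ hp0 ha hb0 hb1 g_0 g_S).
Qed.
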